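(* Let $0<c<1$ be a constant and $\mu=\mu(n)$ a function with $\mu(n)\to\infty$. For every strategy $\mathcal{S}_1$ there exists a strategy $\mathcal{S}_2$ which is $2\mu$-well-behaved for $cn$ rounds, which never creates a multi-edge (so $G^{\mathcal{S}_2}_{cn}(n)$ is simple), and which satisfies $\mathbb{P}[G^{\mathcal{S}_1}_{cn}(n)\in\mathtt{PM}(\mu,\mu^{-1})]\le\mathbb{P}[G^{\mathcal{S}_2}_{cn}(n)\in\mathtt{PM}(2\mu,\mu^{-1})]$.
   Context: Semi-random graph process: start from the empty graph on $[n]$; in round $t$ a vertex $u_t$ (square) is chosen uniformly at random from $[n]$ independently, the player chooses $v_t$ (circle) based on the history and $u_t$, and the edge $u_tv_t$ is added; $G^{\mathcal{S}}_t(n)$ denotes the graph after $t$ rounds under strategy $\mathcal{S}$, viewed as a directed graph with arc $u_t\to v_t$ for each round. Numbers such as $cn$ are rounded down. A vertex $j$ is covered by the circle of round $t$ if $v_t=j$. A strategy is $\omega$-well-behaved for $cn$ rounds if for all $0\le t\le\lfloor cn\rfloor$ every vertex of $G_t$ is covered by at most $\omega$ circles. For a directed graph $D$ with $m$ arcs on $[n]$, $D\in\mathtt{PM}(\mu,\delta)$ if there is $S\subseteq[n]$ such that $D[S]$ has a perfect matching, every vertex of $S$ has in-degree at most $\mu$ in $D$, and $|S|\ge n-2m\delta$. *)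

From HB Require Import structures.
From mathcomp Require Import all_boot all_order all_algebra.
From mathcomp Require Import boolp reals.
Set Implicit Arguments. Unset Strict Implicit. Unset Printing Implicit Defensive.
Import Order.TTheory GRing.Theory Num.Theory.
Local Open Scope ring_scope.

(* An arc (u, v) of round t: u = square (random), v = circle (chosen). *)
Definition arc (n : nat) := ('I_n * 'I_n)%type.

(* A (deterministic) strategy on [n]: given the history (list of arcs of
   previous rounds, in order) and the current square u_t, choose v_t. *)
Definition strategy (n : nat) := seq (arc n) -> 'I_n -> 'I_n.

Fixpoint run_from n (S : strategy n) (h : seq (arc n)) (us : seq 'I_n)
  : seq (arc n) :=
  match us with
  | [::] => h
  | u :: us' => run_from S (rcons h (u, S h u)) us'
  end.

Definition run n (S : strategy n) (us : seq 'I_n) : seq (arc n) :=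
  run_from S [::] us.

Definition indeg n (D : seq (arc n)) (j : 'I_n) : nat :=
  count (fun a : arc n => a.2 == j) D.

Definition adjacent n (D : seq (arc n)) (x y : 'I_n) : bool :=
  has (fun a : arc n => ((a.1 == x) && (a.2 == y)) || ((a.1 == y) && (a.2 == x))) D.

(* D[S] has a perfect matching: a partner map on S which is a fixed-point-free
   involution of S along edges of (the underlying graph of) D. *)
Definition has_perfect_matching n (D : seq (arc n)) (S : {set 'I_n}) : Prop :=
  exists p : 'I_n -> 'I_n, forall x, x \in S ->
    [/\ p x \in S, p x != x, p (p x) = x & adjacent D x (p x)].

Definition PM {R : realType} n (D : seq (arc n)) (mu delta : R) : Prop :=
  exists S : {set 'I_n},
    [/\ has_perfect_matching D S,
        (forall j, j \in S -> (indeg D j)%:R <= mu)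
      & n%:R - 2 * (size D)%:R * delta <= (#|S|)%:R].

Definition rounds (R : realType) (c : R) (n : nat) : nat := Num.truncn (c * n%:R).

Definition well_behaved {R : realType} n (S : strategy n) (omega : R) (m : nat) : Prop :=
  forall us : seq 'I_n, (size us <= m)%N -> forall j, (indeg (run S us) j)%:R <= omega.

Definition same_edge n (a b : arc n) : bool :=
  ((a.1 == b.1) && (a.2 == b.2)) || ((a.1 == b.2) && (a.2 == b.1)).

Definition simple_graph n (D : seq (arc n)) : Prop :=
  (forall a, a \in D -> a.1 != a.2) /\ pairwise (fun a b => ~~ same_edge a b) D.

Definition never_multi n (S : strategy n) (m : nat) : Prop :=
  forall us : seq 'I_n, (size us <= m)%N -> simple_graph (run S us).

(* P[G^S_m(n) satisfies P], squares uniform i.i.d. in [n] *)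
Definition prob {R : realType} n (m : nat) (S : strategy n)
  (P : seq (arc n) -> Prop) : R :=
  (#|[set t : m.-tuple 'I_n | `[< P (run S t) >] ]|)%:R / (n ^ m)%:R.

From Pilot Require Import Defs.
From HB Require Import structures.
From mathcomp Require Import all_boot all_order all_algebra.
From mathcomp Require Import boolp reals.
From mathcomp Require Import lra.
Set Implicit Arguments. Unset Strict Implicit. Unset Printing Implicit Defensive.
Import Order.TTheory GRing.Theory Num.Theory.
Local Open Scope ring_scope.

(* S2 replays S1 on the same squares.  In round t it keeps S1's circle v
   whenever v differs from the square u, is not yet adjacent to u in S2's graph,
   and S1 itself has covered v at most mu - 1 times; otherwise it plays any vertex
   w != u, not adjacent to u, that S2 has covered at most mu - 1 times.  Such a w
   exists while t < cn: at most t neighbours of u are excluded, and at most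
   t/(mu-1) vertices are saturated, which is fewer than (1-c)n once mu(1-c) > 1.
   A vertex is covered by S2 at most mu times in rounds where S2 agrees with S1
   and at most mu times in the other rounds, whence the bound 2mu.  Every edge of
   S1's graph joining two vertices of in-degree at most mu is also an edge of
   S2's graph, so a matching witnessing PM(mu, 1/mu) for S1 witnesses
   PM(2mu, 1/mu) for S2 on the same squares. *)

Lemma count_zip_fst (T1 T2 : Type) (p : pred T1) (s : seq T1) (t : seq T2) :
  size s = size t -> count (fun z => p z.1) (zip s t) = count p s.
Proof.
move=> e; have := congr1 (count p) (unzip1_zip (eq_leq e)).
by rewrite count_map => <-.
Qed.

Lemma count_zip_snd (T1 T2 : Type) (p : pred T2) (s : seq T1) (t : seq T2) :
  size s = size t -> count (fun z => p z.2) (zip s t) = count p t.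
Proof.
move=> e; have := congr1 (count p) (unzip2_zip (eq_leq (esym e))).
by rewrite count_map => <-.
Qed.

Section Runs.
Variable n : nat.
Implicit Types (S : strategy n) (D : seq (Defs.arc n)).

Lemma run_rcons S us u :
  run S (rcons us u) = rcons (run S us) (u, S (run S us) u).
Proof. by rewrite /run; elim: us [::] => [|x us IH] h //=. Qed.

Lemma map_fst_run S us : map fst (run S us) = us.
Proof. by elim/last_ind: us => [|us u IH] //; rewrite run_rcons map_rcons IH. Qed.

Lemma size_run S us : size (run S us) = size us.
Proof. by rewrite -(size_map fst) map_fst_run. Qed.

Lemma indeg_rcons D a j : indeg (rcons D a) j = (indeg D j + (a.2 == j))%N.
Proof. by rewrite /indeg -cats1 count_cat /= addn0. Qed.

Lemma adjacentC D x y : adjacent D x y = adjacent D y x.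
Proof. by apply: eq_has => a; rewrite orbC. Qed.

Lemma adjacent_rcons D a x y : adjacent (rcons D a) x y =
  ((a.1 == x) && (a.2 == y)) || ((a.1 == y) && (a.2 == x)) || adjacent D x y.
Proof. by rewrite /adjacent has_rcons. Qed.

Lemma sum_indeg D : (\sum_(j : 'I_n) indeg D j)%N = size D.
Proof.
elim: D => [|a D IH]; first by rewrite big1.
rewrite /indeg /= big_split /= -/(indeg D) IH (bigD1 a.2) //= eqxx big1 // => j.
by rewrite eq_sym => /negbTE ->.
Qed.

Lemma card_adjacent_le D u : (#|[set w | adjacent D u w]| <= size D)%N.
Proof.
pose other (a : Defs.arc n) := if a.1 == u then a.2 else a.1.
apply: (@leq_trans (size (map other D))); last by rewrite size_map.
apply: leq_trans (card_size _); apply: subset_leq_card; apply/subsetP => w.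
rewrite inE => /hasP[a aD /orP[]/andP[/eqP a1 /eqP a2]]; apply/mapP; exists a => //.
  by rewrite /other a1 a2 eqxx.
by rewrite /other a1 a2; case: eqP.
Qed.

Lemma card_indeg_ge (R : numDomainType) D (a : R) :
  #|[set w | a <= (indeg D w)%:R]|%:R * a <= (size D)%:R.
Proof.
set H := [set w | a <= (indeg D w)%:R].
rewrite -sum_indeg natr_sum mulr_natl -sumr_const [leRHS](bigID [in H]) /= -[leLHS]addr0.
apply: lerD; first by apply: ler_sum => w; rewrite inE.
by apply: sumr_ge0 => w _; rewrite ler0n.
Qed.

Definition agree_indeg D1 D2 j :=
  count (fun z : Defs.arc n * Defs.arc n => (z.1.2 == j) && (z.2.2 == j)) (zip D1 D2).
Definition diverge_indeg D1 D2 j :=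
  count (fun z : Defs.arc n * Defs.arc n => (z.1.2 != j) && (z.2.2 == j)) (zip D1 D2).

Lemma indeg_agree_diverge D1 D2 j : size D1 = size D2 ->
  indeg D2 j = (agree_indeg D1 D2 j + diverge_indeg D1 D2 j)%N.
Proof.
move=> e; rewrite /indeg -(count_zip_snd (fun a : Defs.arc n => a.2 == j) e).
by rewrite -size_filter -(count_predC (fun z => z.1.2 == j)) !count_filter.
Qed.

Lemma agree_indeg_le D1 D2 j : size D1 = size D2 -> (agree_indeg D1 D2 j <= indeg D1 j)%N.
Proof.
move=> e; rewrite /indeg -(count_zip_fst (fun a : Defs.arc n => a.2 == j) e).
by apply: sub_count => z /andP[].
Qed.

Lemma agree_indeg_rcons D1 D2 a1 a2 j : size D1 = size D2 ->
  agree_indeg (rcons D1 a1) (rcons D2 a2) j =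
  (agree_indeg D1 D2 j + (a1.2 == j) && (a2.2 == j))%N.
Proof. by move=> e; rewrite /agree_indeg zip_rcons // -cats1 count_cat /= addn0. Qed.

Lemma diverge_indeg_rcons D1 D2 a1 a2 j : size D1 = size D2 ->
  diverge_indeg (rcons D1 a1) (rcons D2 a2) j =
  (diverge_indeg D1 D2 j + (a1.2 != j) && (a2.2 == j))%N.
Proof. by move=> e; rewrite /diverge_indeg zip_rcons // -cats1 count_cat /= addn0. Qed.

End Runs.

Lemma le_prob (R : realType) n m (S1 S2 : strategy n) (P1 P2 : seq (Defs.arc n) -> Prop) :
  (forall t : m.-tuple 'I_n, P1 (run S1 t) -> P2 (run S2 t)) ->
  prob (R:=R) m S1 P1 <= prob (R:=R) m S2 P2.
Proof.
move=> P12; rewrite /prob ler_wpM2r ?invr_ge0 ?ler0n // ler_nat.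
apply: subset_leq_card; apply/subsetP => t; rewrite !inE => /asboolP P1t.
by apply/asboolP; apply: P12.
Qed.

Section Capped.
Variables (R : realType) (n : nat) (mu : R).
Implicit Types (D h : seq (Defs.arc n)) (u w : 'I_n).

Definition admissible h u w : bool :=
  [&& w != u, ~~ adjacent h u w & ((indeg h w).+1)%:R <= mu].

Lemma exists_admissible (c : R) h u : c < 1 -> 1 < mu * (1 - c) ->
  ((size h).+1)%:R <= c * n%:R -> exists w, admissible h u w.
Proof.
move=> c1 mu_large size_h; case: (pickP (admissible h u)) => [w|none]; first by exists w.
exfalso.
set A := [set w | adjacent h u w]; set H := [set w | mu - 1 <= (indeg h w)%:R].
have cover : [set: 'I_n] \subset [set u] :|: A :|: H.
  apply/subsetP => w _; move: (none w); rewrite /admissible !inE.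
  case: eqP => [->|_ /=]; first by [].
  case: (adjacent h u w) => //= /negbT; rewrite -ltNge -addn1 natrD; lra.
have card_n : (n <= 1 + #|A| + #|H|)%N.
  have := subset_leq_card cover; rewrite cardsT card_ord => /leq_trans; apply.
  rewrite (leq_trans (leq_card_setU _ _)) // leq_add2r -(cards1 u).
  exact: leq_card_setU.
have card_A := card_adjacent_le h u; have card_H := card_indeg_ge h (mu - 1).
move: card_n card_A; rewrite -!(ler_nat R) !natrD => card_n card_A.
rewrite -addn1 natrD in size_h.
set a := #|A|%:R in card_n card_A; set k := #|H|%:R in card_n card_H.
set t := (size h)%:R in size_h card_A card_H.
have N0 : 0 <= n%:R :> R by []; have t0 : 0 <= t by [].
have c0 : 0 < c by nra.
have mu_gt1 : 1 < mu by nra.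
have many_saturated : (1 - c) * n%:R <= k by lra.
nra.
Qed.

Variable S1 : strategy n.

Definition capped_choice h h1 u : 'I_n :=
  let v := S1 h1 u in
  if [&& v != u, ~~ adjacent h u v & ((indeg h1 v).+1)%:R <= mu] then v
  else odflt u [pick w | admissible h u w].

(* S2 sees only its own history; S1's history is recomputed from the squares in it. *)
Definition capped : strategy n := fun h u => capped_choice h (run S1 (map fst h)) u.

Lemma run_capped_rcons us u : run capped (rcons us u) =
  rcons (run capped us) (u, capped_choice (run capped us) (run S1 us) u).
Proof. by rewrite run_rcons /capped map_fst_run. Qed.

Lemma capped_choice_keep h h1 u : S1 h1 u != u -> ~~ adjacent h u (S1 h1 u) ->
  ((indeg h1 (S1 h1 u)).+1)%:R <= mu -> capped_choice h h1 u = S1 h1 u.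
Proof. by move=> vu nadj deg; rewrite /capped_choice vu nadj deg. Qed.

Lemma capped_choice_spec h h1 u : (exists w, admissible h u w) ->
  let x := capped_choice h h1 u in
  [/\ x != u, ~~ adjacent h u x &
     (x = S1 h1 u /\ ((indeg h1 x).+1)%:R <= mu) \/ ((indeg h x).+1)%:R <= mu].
Proof.
move=> [w0 adm0]; rewrite /capped_choice /=.
case: ifP => [/and3P[vu nadj deg]|_]; first by split => //; left.
case: pickP => [w /and3P[wu nadj deg]|/(_ w0)]; last by rewrite adm0.
by split => //; right.
Qed.

Lemma adjacent_capped us x y : x != y -> adjacent (run S1 us) x y ->
  (indeg (run S1 us) x)%:R <= mu -> (indeg (run S1 us) y)%:R <= mu ->
  adjacent (run capped us) x y.
Proof.
move=> xy; elim/last_ind: us => [|us u IH] //.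
rewrite run_capped_rcons run_rcons !adjacent_rcons !indeg_rcons /=.
set h := run capped us; set h1 := run S1 us => adj1 degx degy.
have degx' : (indeg h1 x)%:R <= mu by apply: le_trans degx; rewrite ler_nat leq_addr.
have degy' : (indeg h1 y)%:R <= mu by apply: le_trans degy; rewrite ler_nat leq_addr.
case/orP: adj1 => [new|old]; last by rewrite IH ?orbT.
have [|nadj] := boolP (adjacent h x y); first by rewrite orbT.
case/orP: new => /andP[/eqP ux /eqP vy]; subst u.
- rewrite vy eqxx addn1 in degy.
  by rewrite capped_choice_keep ?vy ?eqxx // eq_sym.
- rewrite vy eqxx addn1 in degx.
  by rewrite capped_choice_keep ?vy ?eqxx ?orbT // adjacentC.
Qed.

Section Rounds.
Variable m : nat.
Hypothesis admissible_exists : forall h u, (size h < m)%N -> exists w, admissible h u w.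
Hypothesis mu_ge0 : 0 <= mu.

Lemma capped_step us u : (size us < m)%N ->
  let x := capped_choice (run capped us) (run S1 us) u in
  [/\ x != u, ~~ adjacent (run capped us) u x &
     (x = S1 (run S1 us) u /\ ((indeg (run S1 us) x).+1)%:R <= mu)
     \/ ((indeg (run capped us) x).+1)%:R <= mu].
Proof. by move=> size_us; apply/capped_choice_spec/admissible_exists; rewrite size_run. Qed.

Lemma size_run_capped us : size (run S1 us) = size (run capped us).
Proof. by rewrite !size_run. Qed.

Lemma agree_indeg_capped us j : (size us <= m)%N ->
  (agree_indeg (run S1 us) (run capped us) j)%:R <= mu.
Proof.
elim/last_ind: us => [|us u IH] size_us; first by rewrite /agree_indeg.
rewrite size_rcons in size_us; have [xu _ kept] := capped_step u size_us.
rewrite run_capped_rcons run_rcons agree_indeg_rcons ?size_run_capped //=.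
case: eqP => [_|_] /=; last by rewrite addn0; apply/IH/ltnW.
case: eqP => [xj|_] /=; last by rewrite addn0; apply/IH/ltnW.
rewrite addn1; case: kept => [[_ deg]|deg]; apply: le_trans deg; rewrite ler_nat ltnS -xj.
- exact/agree_indeg_le/size_run_capped.
- by rewrite (indeg_agree_diverge _ (size_run_capped us)) leq_addr.
Qed.

Lemma diverge_indeg_capped us j : (size us <= m)%N ->
  (diverge_indeg (run S1 us) (run capped us) j)%:R <= mu.
Proof.
elim/last_ind: us => [|us u IH] size_us; first by rewrite /diverge_indeg.
rewrite size_rcons in size_us; have [xu _ kept] := capped_step u size_us.
rewrite run_capped_rcons run_rcons diverge_indeg_rcons ?size_run_capped //=.
case: eqP => [_|vj] /=; first by rewrite addn0; apply/IH/ltnW.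
case: eqP => [xj|_] /=; last by rewrite addn0; apply/IH/ltnW.
rewrite addn1; case: kept => [[xv _]|deg]; first by case: vj; rewrite -xv.
apply: le_trans deg; rewrite ler_nat ltnS -xj.
by rewrite (indeg_agree_diverge _ (size_run_capped us)) leq_addl.
Qed.

Lemma indeg_capped us j : (size us <= m)%N -> (indeg (run capped us) j)%:R <= 2 * mu.
Proof.
move=> size_us; rewrite (indeg_agree_diverge _ (size_run_capped us)) natrD mulr_natl mulr2n.
by rewrite lerD ?agree_indeg_capped ?diverge_indeg_capped.
Qed.

Lemma simple_capped us : (size us <= m)%N -> simple_graph (run capped us).
Proof.
elim/last_ind: us => [|us u IH] size_us; first by [].
rewrite size_rcons in size_us; have [xu nadj _] := capped_step u size_us.
have [loopless pairwise_distinct] := IH (ltnW size_us).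
rewrite run_capped_rcons; split.
  by move=> a; rewrite mem_rcons inE => /orP[/eqP ->|/loopless] //=; rewrite eq_sym.
rewrite -cats1 pairwise_cat pairwise_distinct allrel1r /= andbT.
by move: nadj; rewrite /adjacent -all_predC.
Qed.

Lemma PM_capped us delta : (size us <= m)%N ->
  PM (run S1 us) mu delta -> PM (run capped us) (2 * mu) delta.
Proof.
move=> size_us [S [[p match_p] deg_S size_S]]; exists S; split.
- exists p => x xS; have [pxS pxx ppx adj] := match_p x xS; split => //.
  by apply: adjacent_capped; rewrite 1?eq_sym ?deg_S.
- by move=> j _; apply: indeg_capped.
- by rewrite size_run -(size_run S1).
Qed.

End Rounds.
End Capped.

Theorem proposition9 (R : realType) (c : R) (mu : nat -> R) :
  0 < c < 1 ->
  (forall M : R, exists N : nat, forall n : nat, (N <= n)%N -> M <= mu n) ->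
  forall S1 : forall n : nat, strategy n,
  exists N : nat, forall n : nat, (N <= n)%N ->
  exists S2 : strategy n,
    [/\ well_behaved S2 (2 * mu n) (rounds c n),
        never_multi S2 (rounds c n)
      & prob (R:=R) (rounds c n) (S1 n) (fun D => PM D (mu n) (mu n)^-1)
          <= prob (R:=R) (rounds c n) S2 (fun D => PM D (2 * mu n) (mu n)^-1)].
Proof.
move=> /andP[c_gt0 c_lt1] mu_to_oo S1.
have [N mu_ge] := mu_to_oo ((1 - c)^-1 + 1).
exists N => n Nn; set m := rounds c n.
have mu_large : 1 < mu n * (1 - c).
  have gap : 0 < 1 - c by rewrite subr_gt0.
  have := ler_wpM2r (ltW gap) (mu_ge n Nn); rewrite mulrDl mulVf ?gt_eqF //; lra.
have mu_ge0 : 0 <= mu n by nra.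
have m_le : m%:R <= c * n%:R by rewrite truncn_le mulr_ge0 // ltW.
have adm (h : seq (Defs.arc n)) (u : 'I_n) : (size h < m)%N -> exists w, admissible (mu n) h u w.
  move=> size_h; apply: (exists_admissible u c_lt1 mu_large).
  by apply: le_trans m_le; rewrite ler_nat.
exists (capped (mu n) (S1 n)); split.
- by move=> us size_us j; apply: (indeg_capped (S1 n) adm mu_ge0).
- by move=> us; apply: (simple_capped (S1 n) adm).
- by apply: le_prob => t; apply: (PM_capped adm mu_ge0); rewrite size_tuple.
Qed.
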